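(* Let $p$ be a prime, $m$ a positive integer, $q=p^m$, and $q-1=3s$ with $s$ a positive integer. Let $\gamma$ be a primitive element of $\mathbb{F}_q$ and $\xi=\gamma^s$ (so $\xi^3=1$, $\xi$ a primitive cube root of unity). Let $r$ be a positive integer and $f\in\mathbb{F}_q[x]$ with $f(x)\equiv ax^2+bx+c\pmod{x^3-1}$ for some $a,b,c\in\mathbb{F}_q$ satisfying $a^2+b^2+c^2-ab-bc-ca=1$. Let $A_i=f(\xi^i)$ for $i=0,1,2$ and $P(x)=x^rf(x^s)$. Then $P(x)$ is a permutation polynomial of $\mathbb{F}_q$ if and only if $\gcd(r,s)=1$, $A_i\neq0$ for $i=0,1,2$, $A_0^s=1$, $3\mid\mathrm{Ind}_\gamma(A_0)$, and $3\nmid r+\mathrm{Ind}_\gamma(A_2^2)$.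
   Context: A permutation polynomial of $\mathbb{F}_q$ is one inducing a bijection of $\mathbb{F}_q$. For nonzero $a\in\mathbb{F}_q$, $\mathrm{Ind}_\gamma(a)$ is the residue class $b\bmod(q-1)$ with $a=\gamma^b$; divisibility by $3$ is well defined since $3\mid q-1$. *)

From HB Require Import structures.
From mathcomp Require Import all_boot all_order all_algebra all_field.
Set Implicit Arguments. Unset Strict Implicit. Unset Printing Implicit Defensive.
Import GRing.Theory.
Local Open Scope ring_scope.

Definition perm_poly (F : finFieldType) (P : {poly F}) : Prop :=
  bijective (fun x : F => P.[x]).

Definition primitive_elt (F : finFieldType) (g : F) : bool :=
  (#|F|.-1).-primitive_root g.

(* Index (discrete logarithm) of a w.r.t. g: the least k in [0, q-1) with
   g^k = a; this is the canonical representative of Ind_g(a) mod (q-1)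
   whenever a is nonzero and g is primitive. *)
Definition Ind (F : finFieldType) (g a : F) : nat :=
  find (fun k => g ^+ k == a) (iota 0 #|F|.-1).

From HB Require Import structures.
From mathcomp Require Import all_boot all_order all_algebra all_field.
From mathcomp Require Import cyclic ring.
Set Implicit Arguments.
Unset Strict Implicit.
Unset Printing Implicit Defensive.
Import GRing.Theory.
Local Open Scope ring_scope.

(* Write q - 1 = 3s and G(y) = y^r f(y)^s.  Since P(x)^s = G(x^s) and x |-> x^s
   maps F^* onto the cube roots of unity {1, xi, xi^2}, P permutes F exactly
   when gcd(r, s) = 1 and G permutes {1, xi, xi^2}; this criterion holds for
   every x^r h(x^s) with s | q - 1.  Reducing f modulo x^3 - 1 turns the
   hypothesis on a, b, c into A_1 A_2 = 1, hence G(xi) G(xi^2) = 1, and then G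
   permutes the cube roots iff G(1) = 1 and G(xi) != 1.  Finally G(1) = A_0^s
   and G(xi) = xi^(r + Ind(A_2^2)). *)

Section FinFieldPowers.

Variable F : finFieldType.

Lemma expf_card_pred {x : F} : x != 0 -> x ^+ #|F|.-1 = 1.
Proof.
move=> x_neq0; apply: (mulIf x_neq0).
by rewrite mul1r -exprSr prednK ?expf_card // (cardD1 (0 : F)).
Qed.

Lemma finField_prim_root : exists g : F, primitive_elt g.
Proof.
have n_gt0 : (0 < #|F|.-1)%N.
  by rewrite -ltnS prednK ?finNzRing_gt1 // ltnW ?finNzRing_gt1.
have : has (#|F|.-1).-primitive_root (enum [pred x : F | x != 0]).
  apply: has_prim_root => //; rewrite ?enum_uniq //.
    by apply/allP=> x; rewrite mem_enum unity_rootE => /expf_card_pred ->.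
  by rewrite -cardE cardC1.
by case/hasP=> g _ gP; exists g.
Qed.

Lemma expr_Ind {g a : F} : primitive_elt g -> a != 0 -> g ^+ Ind g a = a.
Proof.
move=> gP a_neq0; have [i ->] := prim_rootP gP (expf_card_pred a_neq0).
have has_i : has (fun k => g ^+ k == g ^+ i) (iota 0 #|F|.-1).
  by apply/hasP; exists (val i); rewrite ?mem_iota /=.
have := nth_find 0%N has_i; rewrite nth_iota ?add0n => [/eqP //|].
by move: has_i; rewrite has_find size_iota.
Qed.

Lemma dvdn_add_Ind (d s k : nat) (g a : F) :
  #|F|.-1 = (d * s)%N -> primitive_elt g -> a != 0 ->
  (d %| k + Ind g a)%N = ((g ^+ s) ^+ k * a ^+ s == 1).
Proof.
move=> card_ds gP a_neq0; have s_gt0 : (0 < s)%N.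
  by move: (prim_order_gt0 gP); rewrite card_ds muln_gt0 => /andP[].
rewrite -{2}(expr_Ind gP a_neq0) -!exprM -exprD mulnC -mulnDl.
by rewrite -(prim_order_dvd gP) card_ds dvdn_pmul2r.
Qed.

Lemma dvdn_Ind (d s : nat) (g a : F) :
  #|F|.-1 = (d * s)%N -> primitive_elt g -> a != 0 ->
  (d %| Ind g a)%N = (a ^+ s == 1).
Proof.
by move=> card_ds gP /(dvdn_add_Ind 0 card_ds gP); rewrite expr0 mul1r.
Qed.

Lemma prim_root_exprs (d s : nat) (g : F) :
  #|F|.-1 = (d * s)%N -> primitive_elt g -> d.-primitive_root (g ^+ s).
Proof.
move=> card_ds gP; have d_dvd : (d %| #|F|.-1)%N by rewrite card_ds dvdn_mulr.
have := dvdn_prim_root gP d_dvd; rewrite card_ds mulKn //.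
by move: (prim_order_gt0 gP); rewrite card_ds muln_gt0 => /andP[].
Qed.

End FinFieldPowers.

Lemma eq_expr_coprime (F : fieldType) (r s : nat) (x y : F) :
  (0 < r)%N -> coprime r s -> x != 0 ->
  x ^+ r = y ^+ r -> x ^+ s = y ^+ s -> x = y.
Proof.
move=> r_gt0 co_rs x_neq0 xy_r xy_s; have [u _] := Bezoutl s r_gt0.
rewrite (eqP co_rs) => /dvdnP[k def_k].
have e : (s * u).+1 = (r * k)%N by rewrite mulnC [(r * k)%N]mulnC -def_k add1n.
have xsu_neq0 : (x ^+ s) ^+ u != 0 by rewrite !expf_neq0.
apply: (mulIf xsu_neq0); rewrite [in RHS]xy_s -!exprM -!exprS e !exprM.
by rewrite xy_r.
Qed.

Lemma surj_in_inj (T : finType) (A : {pred T}) (f : T -> T) :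
  {in A, forall y, exists2 x, x \in A & y = f x} -> {in A &, injective f}.
Proof.
move=> f_onto; apply/imset_injP; rewrite eqn_leq leq_imset_card /=.
by apply/subset_leq_card/subsetP=> y /f_onto[x Ax ->]; apply: imset_f.
Qed.

Definition permutes {T : eqType} (A : {pred T}) (f : T -> T) :=
  {in A, forall y, f y \in A} /\ {in A &, injective f}.

Section PermPolyCriterion.

Variables (F : finFieldType) (d s r : nat) (h : {poly F}).
Hypotheses (card_ds : #|F|.-1 = (d * s)%N) (r_gt0 : (0 < r)%N).

Local Notation P := ('X^r * (h \Po 'X^s)).
Local Notation G := (fun y => y ^+ r * h.[y] ^+ s).

Let ds_gt0 : (0 < d * s)%N.
Proof.
by rewrite -card_ds -ltnS prednK ?finNzRing_gt1 // ltnW ?finNzRing_gt1.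
Qed.

Let d_gt0 : (0 < d)%N. Proof. by move: ds_gt0; rewrite muln_gt0 => /andP[]. Qed.

Let s_gt0 : (0 < s)%N. Proof. by move: ds_gt0; rewrite muln_gt0 => /andP[]. Qed.

Lemma horner_XrCompXs (x : F) : P.[x] = x ^+ r * h.[x ^+ s].
Proof. by rewrite hornerM hornerXn horner_comp hornerXn. Qed.

Lemma horner0_XrCompXs : P.[0] = 0.
Proof. by rewrite horner_XrCompXs expr0n gtn_eqF // mul0r. Qed.

Lemma exprs_horner_XrCompXs (x : F) :
  P.[x] ^+ s = (x ^+ s) ^+ r * h.[x ^+ s] ^+ s.
Proof. by rewrite horner_XrCompXs exprMn -!exprM mulnC. Qed.

Lemma unity_root_neq0 (y : F) : y \in d.-unity_root -> y != 0.
Proof.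
rewrite -topredE /= unity_rootE; apply: contraTneq => ->.
by rewrite expr0n gtn_eqF // eq_sym oner_eq0.
Qed.

Lemma unity_root_exprs (x : F) : x != 0 -> x ^+ s \in d.-unity_root.
Proof.
move=> x_neq0; rewrite -topredE /= unity_rootE -exprM mulnC -card_ds.
by rewrite expf_card_pred.
Qed.

Lemma unity_root_exprs_onto (y : F) :
  y \in d.-unity_root -> exists2 x, x != 0 & y = x ^+ s.
Proof.
rewrite -topredE => /unity_rootP y_d; have [g gP] := @finField_prim_root F.
have [i ->] := prim_rootP (prim_root_exprs card_ds gP) y_d.
exists (g ^+ i); last by rewrite -!exprM mulnC.
by rewrite expf_neq0 // (prim_root_eq0 gP) -lt0n card_ds.
Qed.

Lemma perm_poly_coprime : perm_poly P -> coprime r s.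
Proof.
case=> Q PK _; have [g gP] := @finField_prim_root F.
have e_dvd_n : (gcdn r s %| #|F|.-1)%N by rewrite card_ds dvdn_mull ?dvdn_gcdr.
have zP := dvdn_prim_root gP e_dvd_n; set z := g ^+ _ in zP.
have z1 k : (gcdn r s %| k)%N -> z ^+ k = 1.
  by rewrite (prim_order_dvd zP) => /eqP.
have : P.[z] = P.[1].
  by rewrite !horner_XrCompXs !expr1n z1 ?dvdn_gcdl // z1 ?dvdn_gcdr.
by move/(can_inj PK)/eqP; rewrite -[z]expr1 -(prim_order_dvd zP) dvdn1.
Qed.

Lemma perm_poly_permutes : perm_poly P -> permutes d.-unity_root G.
Proof.
case=> Q PK QK; have P_inj := can_inj PK.
have P_neq0 x : x != 0 -> P.[x] != 0.
  apply: contraNneq => Px0; apply/eqP/P_inj.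
  by rewrite /= Px0 horner0_XrCompXs.
split=> [y /unity_root_exprs_onto[x x_neq0 ->] | ].
  by rewrite -exprs_horner_XrCompXs unity_root_exprs ?P_neq0.
apply: surj_in_inj => y /unity_root_exprs_onto[w w_neq0 ->].
have Qw_neq0 : Q w != 0.
  by apply: contraNneq w_neq0 => Qw0; rewrite -[w]QK /= Qw0 horner0_XrCompXs.
exists (Q w ^+ s); first exact: unity_root_exprs.
by rewrite -exprs_horner_XrCompXs QK.
Qed.

Lemma permutes_perm_poly :
  coprime r s -> permutes d.-unity_root G -> perm_poly P.
Proof.
move=> co_rs [G_into G_inj].
have P_neq0 x : x != 0 -> P.[x] != 0.
  move=> /unity_root_exprs/G_into/unity_root_neq0 /=.
  by rewrite -exprs_horner_XrCompXs expf_eq0 s_gt0.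
have P_eq0 x : (P.[x] == 0) = (x == 0).
  have [->|/P_neq0/negPf //] := eqVneq x 0.
  by rewrite horner0_XrCompXs eqxx.
apply: injF_bij => x y /= Pxy.
have [x0|x_neq0] := eqVneq x 0.
  move: Pxy; rewrite x0 horner0_XrCompXs => /esym/eqP.
  by rewrite P_eq0 => /eqP.
have y_neq0 : y != 0 by rewrite -P_eq0 -Pxy P_eq0.
have xy_s : x ^+ s = y ^+ s.
  apply: G_inj; rewrite ?unity_root_exprs //=.
  by rewrite -!exprs_horner_XrCompXs Pxy.
have xy_r : x ^+ r = y ^+ r.
  have : P.[x] != 0 by apply: P_neq0.
  rewrite horner_XrCompXs mulf_eq0 negb_or => /andP[_ hx_neq0].
  apply: (mulIf hx_neq0).
  by rewrite -horner_XrCompXs Pxy horner_XrCompXs xy_s.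
exact: eq_expr_coprime r_gt0 co_rs x_neq0 xy_r xy_s.
Qed.

Lemma perm_poly_XrCompXsP :
  perm_poly P <-> coprime r s /\ permutes d.-unity_root G.
Proof.
split=> [P_perm | [co_rs G_perm]]; last exact: permutes_perm_poly.
by split; [apply: perm_poly_coprime | apply: perm_poly_permutes].
Qed.

End PermPolyCriterion.

Lemma prime_prim_root (R : idomainType) (p : nat) (z : R) :
  prime p -> z ^+ p = 1 -> z != 1 -> p.-primitive_root z.
Proof.
move=> /primeP[p_gt1 p_div] zp1 z_neq1.
have [m mP /p_div/pred2P[m1|mp]] := prim_order_exists (ltnW p_gt1) zp1.
  by move: mP; rewrite m1 => /prim_expr_order/eqP; rewrite expr1 (negPf z_neq1).
by rewrite -mp.
Qed.

Lemma prim_root3_eq0 (R : idomainType) (xi : R) :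
  3.-primitive_root xi -> xi ^+ 2 + xi + 1 = 0.
Proof.
move=> xiP; have : (xi - 1) * (xi ^+ 2 + xi + 1) = xi ^+ 3 - 1 by ring.
rewrite (prim_expr_order xiP) subrr => /eqP; rewrite mulf_eq0 subr_eq0.
by rewrite -{1}[xi]expr1 -(expr0 xi) (eq_prim_root_expr xiP) => /eqP.
Qed.

Lemma cube_root_norm (R : comPzRingType) (xi a b c : R) :
  xi ^+ 2 + xi + 1 = 0 ->
  (a * xi ^+ 2 + b * xi + c) * (a * xi + b * xi ^+ 2 + c)
    = a ^+ 2 + b ^+ 2 + c ^+ 2 - a * b - b * c - c * a.
Proof.
move=> xi_eq0; apply/eqP; rewrite -subr_eq0.
have -> : (a * xi ^+ 2 + b * xi + c) * (a * xi + b * xi ^+ 2 + c)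
    - (a ^+ 2 + b ^+ 2 + c ^+ 2 - a * b - b * c - c * a)
    = (xi ^+ 2 + xi + 1)
      * ((xi - 1) * (a ^+ 2 + b ^+ 2 + a * b * xi) + a * b + b * c + c * a).
  by ring.
by rewrite xi_eq0 mul0r.
Qed.

Lemma permutes_unity_root3 (F : fieldType) (xi : F) (G : F -> F) :
    3.-primitive_root xi -> G xi ^+ 3 = 1 -> G xi * G (xi ^+ 2) = 1 ->
  permutes 3.-unity_root G <-> G 1 = 1 /\ G xi != 1.
Proof.
set u := G xi => xiP u3 u_inv.
have u_neq0 : u != 0.
  apply/eqP=> u0; move: u_inv; rewrite u0 mul0r => /eqP.
  by rewrite eq_sym oner_eq0.
have G_xi2 : G (xi ^+ 2) = u ^+ 2.
  by apply: (mulfI u_neq0); rewrite u_inv -exprS u3.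
have xi_inj i j : xi ^+ i = xi ^+ j -> (i == j %[mod 3])%N.
  by move/eqP; rewrite (eq_prim_root_expr xiP).
have uP : u != 1 -> 3.-primitive_root u by exact: prime_prim_root u3.
have xi_root i : xi ^+ i \in 3.-unity_root.
  rewrite -topredE /= unity_rootE -exprM mulnC exprM (prim_expr_order xiP).
  by rewrite expr1n.
have root_xi y : y \in 3.-unity_root -> exists i : 'I_3, y = xi ^+ i.
  by rewrite -topredE => /unity_rootP/(prim_rootP xiP)[i ->]; exists i.
split=> [[G_into G_inj] | [G1 /uP u_prim]].
  have G_xi_inj i j : G (xi ^+ i) = G (xi ^+ j) -> (i == j %[mod 3])%N.
    by move/G_inj; rewrite !xi_root => /(_ isT isT)/xi_inj.
  have u_neq1 : u != 1.
    apply/eqP=> u1; have := G_xi_inj 1%N 2%N.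
    by rewrite expr1 -/u G_xi2 u1 expr1n => /(_ erefl).
  split=> //; have := G_into _ (xi_root 0%N).
  rewrite -topredE => /unity_rootP/(prim_rootP (uP u_neq1))[k Gk].
  case: k Gk => [[|[|[|//]]] /= _]; rewrite expr0 => G1k; first by rewrite G1k.
    by have := G_xi_inj 0%N 1%N; rewrite expr0 G1k => /(_ erefl).
  by have := G_xi_inj 0%N 2%N; rewrite expr0 G1k G_xi2 => /(_ erefl).
have G_pow (i : 'I_3) : G (xi ^+ i) = u ^+ i.
  by case: i => [[|[|[|//]]] _] /=; rewrite ?expr0 ?G1 ?G_xi2.
split=> [_ /root_xi[i ->] | _ _ /root_xi[i ->] /root_xi[j ->]].
  by rewrite G_pow -topredE /= unity_rootE -exprM mulnC exprM u3 expr1n.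
rewrite !G_pow => /eqP; rewrite (eq_prim_root_expr u_prim).
by rewrite -(eq_prim_root_expr xiP) => /eqP.
Qed.

Lemma horner_prim_root3_mul (F : fieldType) (f : {poly F}) (a b c xi : F) :
    3.-primitive_root xi -> f %% ('X^3 - 1) = a *: 'X^2 + b *: 'X + c%:P ->
  f.[xi] * f.[xi ^+ 2] = a ^+ 2 + b ^+ 2 + c ^+ 2 - a * b - b * c - c * a.
Proof.
move=> xiP f_mod; have f_cube y : y ^+ 3 = 1 -> f.[y] = a * y ^+ 2 + b * y + c.
  move=> y3; rewrite -(horner_mod f (q := 'X^3 - 1)) ?f_mod ?hornerE //.
  by rewrite rootE !hornerE y3 subrr.
have xi4 : (xi ^+ 2) ^+ 2 = xi by rewrite -exprM -(prim_expr_mod xiP).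
rewrite !f_cube ?(prim_expr_order xiP) ?xi4 ?cube_root_norm ?prim_root3_eq0 //.
by rewrite -exprM mulnC exprM (prim_expr_order xiP) expr1n.
Qed.

Section CubicCase.

Variables (F : finFieldType) (s r : nat) (g : F) (f : {poly F}).
Hypotheses (card_3s : #|F|.-1 = (3 * s)%N) (gP : primitive_elt g).
Hypothesis r_gt0 : (0 < r)%N.

Local Notation xi := (g ^+ s).
Local Notation G := (fun y => y ^+ r * f.[y] ^+ s).

Hypothesis f_norm : f.[xi] * f.[xi ^+ 2] = 1.

Let xiP : 3.-primitive_root xi. Proof. exact: prim_root_exprs. Qed.

Let f_xi_neq0 : f.[xi] != 0 /\ f.[xi ^+ 2] != 0.
Proof. by apply/norP; rewrite -mulf_eq0 f_norm oner_eq0. Qed.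

Let G_xi3 : G xi ^+ 3 = 1.
Proof.
rewrite exprMn -[_ ^+ r ^+ 3]exprM mulnC exprM (prim_expr_order xiP).
by rewrite expr1n mul1r -exprM mulnC -card_3s expf_card_pred; case: f_xi_neq0.
Qed.

Let G_xi_inv : G xi * G (xi ^+ 2) = 1.
Proof.
by rewrite mulrACA -!exprMn -exprS (prim_expr_order xiP) f_norm !expr1n mulr1.
Qed.

Let G_xi_neq1 :
  (xi ^+ r * f.[xi] ^+ s != 1) = ~~ (3 %| r + Ind g (f.[xi ^+ 2] ^+ 2))%N.
Proof.
have [_ f_xi2_neq0] := f_xi_neq0.
rewrite (dvdn_add_Ind r card_3s gP (expf_neq0 2 f_xi2_neq0)).
(* A_1^s = (A_2^2)^s, as A_1 A_2 = 1 and A_2^(3s) = 1. *)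
congr (~~ (_ * _ == 1)).
rewrite (exprAC f.[xi ^+ 2] 2 s) -[LHS]mulr1.
rewrite -[X in _ * X = _](expf_card_pred f_xi2_neq0) card_3s mulnC exprM.
by rewrite (exprS (f.[xi ^+ 2] ^+ s) 2) mulrA -exprMn f_norm expr1n mul1r.
Qed.

Lemma perm_poly_cubic :
  perm_poly ('X^r * (f \Po 'X^s)) <->
  [/\ coprime r s, f.[1] ^+ s = 1 & ~~ (3 %| r + Ind g (f.[xi ^+ 2] ^+ 2))%N].
Proof.
rewrite (perm_poly_XrCompXsP f card_3s r_gt0).
rewrite (permutes_unity_root3 xiP G_xi3 G_xi_inv) /= expr1n mul1r G_xi_neq1.
by split=> [[co_rs [f1 v]] | [co_rs f1 v]].
Qed.

End CubicCase.

Theorem theorem3p4 (F : finFieldType) (p m s r : nat) (g : F) (f : {poly F})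
    (a b c : F) :
  prime p -> (0 < m)%N -> #|F| = (p ^ m)%N ->
  (0 < s)%N -> #|F|.-1 = (3 * s)%N ->
  primitive_elt g ->
  (0 < r)%N ->
  f %% ('X^3 - 1) = a *: 'X^2 + b *: 'X + c%:P ->
  a ^+ 2 + b ^+ 2 + c ^+ 2 - a * b - b * c - c * a = 1 ->
  let xi := g ^+ s in
  let A := fun i : nat => f.[xi ^+ i] in
  let P := 'X^r * (f \Po 'X^s) in
  perm_poly P <->
  [/\ coprime r s,
      (forall i : nat, (i < 3)%N -> A i != 0),
      A 0%N ^+ s = 1,
      (3 %| Ind g (A 0%N))%N
    & ~~ (3 %| r + Ind g (A 2%N ^+ 2))%N].
Proof.
move=> _ _ _ s_gt0 card_3s gP r_gt0 f_mod norm1 xi A P.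
have f_norm : A 1%N * A 2%N = 1.
  have xiP := prim_root_exprs card_3s gP.
  by rewrite -norm1 /A expr1 (horner_prim_root3_mul xiP f_mod).
have [A1_neq0 A2_neq0] : A 1%N != 0 /\ A 2%N != 0.
  by apply/norP; rewrite -mulf_eq0 f_norm oner_eq0.
have A0_neq0 : A 0%N ^+ s = 1 -> A 0%N != 0.
  move=> A0s; apply: contra_neq (oner_neq0 F) => A00.
  by rewrite -A0s A00 expr0n gtn_eqF.
rewrite /P (perm_poly_cubic card_3s gP r_gt0 f_norm).
split=> [[co_rs A0s v_cond] | [co_rs _ A0s _ v_cond]]; last by split.
split=> //; last by rewrite (dvdn_Ind card_3s gP) ?A0s ?A0_neq0.
by case=> [|[|[|//]]] _; rewrite ?A0_neq0.
Qed.
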